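(* Let $d:\mathbb{R}\to\mathbb{R}$ be a derivation and $\alpha>0$. Then the function $F_{d,\alpha}:\mathbb{R}_+\to\mathbb{R}_+$ defined by \[ F_{d,\alpha}(x)=x^\alpha\exp\Big(\frac{d(x)}{x}\Big)\qquad(x\in\mathbb{R}_+) \] is multiplicative and $(p,\alpha^{-1}p)$-Jensen convex for every positive rational $p$, i.e. \[ F_{d,\alpha}\big(H_p(x,y)\big)\le H_{p/\alpha}\big(F_{d,\alpha}(x),F_{d,\alpha}(y)\big)\qquad(x,y>0,\ p\in\mathbb{Q},\ p>0). \] Hence, if $d$ is a nonzero derivation, then $F_{d,\alpha}$ is a discontinuous function on $\mathbb{R}_+$ which is $(p,\alpha^{-1}p)$-Jensen convex for all positive rationals $p$.
   Context: $\mathbb{R}_+=]0,\infty[$. For $p\in\mathbb{R}$, $H_p(x,y)=\left(\frac{x^p+y^p}{2}\right)^{1/p}$ if $p\neq0$ and $H_0(x,y)=\sqrt{xy}$ ($x,y>0$). A derivation is a function $d:\mathbb{R}\to\mathbb{R}$ that is additive ($d(x+y)=d(x)+d(y)$) and satisfies $d(xy)=xd(y)+yd(x)$ for all $x,y\in\mathbb{R}$. A function $m:\mathbb{R}_+\to\mathbb{R}_+$ is multiplicative if $m(xy)=m(x)m(y)$ for all $x,y>0$. *)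

From Stdlib Require Import Reals QArith Qreals.
Open Scope R_scope.

Definition H (p x y : R) : R :=
  if Req_EM_T p 0 then sqrt (x * y)
  else Rpower ((Rpower x p + Rpower y p) / 2) (/ p).

Definition derivation (d : R -> R) : Prop :=
  (forall x y, d (x + y) = d x + d y) /\
  (forall x y, d (x * y) = x * d y + y * d x).

Definition F (d : R -> R) (alpha x : R) : R :=
  Rpower x alpha * exp (d x / x).

(** A derivation vanishes on the rationals, so its logarithmic derivative
    [L x = d x / x] turns rational powers into scalar multiples:
    [L (x ^ q) = q L x].  Hence [L (H_p x y)] is the weighted mean of
    [L x] and [L y] with weights [x ^ p] and [y ^ p], and raising both sides
    of the inequality to the power [p / alpha] reduces Jensen convexity to the
    convexity of [exp].  Since [F x = x ^ alpha * exp (L x)] and [L] vanishes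
    at the (dense) positive rationals, continuity of [F] would force [L = 0]
    on [R_+], hence [d = 0]. *)

From Stdlib Require Import Reals QArith Qreals ZArith Lra Lia.
Open Scope R_scope.

Lemma Rpower_pos x c : 0 < Rpower x c.
Proof. apply exp_pos. Qed.

Lemma Rpower_exp t c : Rpower (exp t) c = exp (c * t).
Proof. unfold Rpower. rewrite ln_exp. reflexivity. Qed.

Lemma Rpower_inv_l x c : 0 < x -> c <> 0 -> Rpower (Rpower x (/ c)) c = x.
Proof. intros Hx Hc. rewrite Rpower_mult, Rinv_l, Rpower_1 by assumption. reflexivity. Qed.

Lemma Rpower_le_reg_r A B c : 0 < A -> 0 < B -> 0 < c ->
  Rpower A c <= Rpower B c -> A <= B.
Proof.
  intros HA HB Hc Hle.
  assert (Hc' : / c <> 0) by (apply Rinv_neq_0_compat; lra).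
  rewrite <- (Rpower_inv_l A (/ c)), <- (Rpower_inv_l B (/ c)), Rinv_inv by assumption.
  apply Rle_Rpower_l; [left; apply Rinv_0_lt_compat, Hc|split; [apply Rpower_pos|exact Hle]].
Qed.

Lemma H_nonzero p x y : p <> 0 ->
  H p x y = Rpower ((Rpower x p + Rpower y p) / 2) (/ p).
Proof. intros Hp. unfold H. destruct (Req_EM_T p 0) as [E|_]; [contradiction|reflexivity]. Qed.

Lemma exp_weighted_mean_le a b u v : 0 < a -> 0 < b ->
  (a + b) * exp ((a * u + b * v) / (a + b)) <= a * exp u + b * exp v.
Proof.
  intros Ha Hb. set (w := (a * u + b * v) / (a + b)).
  assert (Hw : a * (u - w) + b * (v - w) = 0) by (unfold w; field; lra).
  assert (tangent : forall t, exp w * (1 + (t - w)) <= exp t).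
  { intros t. replace (exp t) with (exp w * exp (t - w)) by (rewrite <- exp_plus; f_equal; ring).
    apply Rmult_le_compat_l; [left; apply exp_pos|apply exp_ineq1_le]. }
  apply Rle_trans with (a * (exp w * (1 + (u - w))) + b * (exp w * (1 + (v - w)))).
  - replace (a * (exp w * (1 + (u - w))) + b * (exp w * (1 + (v - w))))
      with ((a + b) * exp w + exp w * (a * (u - w) + b * (v - w))) by ring.
    rewrite Hw. lra.
  - apply Rplus_le_compat; apply Rmult_le_compat_l; (lra || apply tangent).
Qed.

Lemma exists_Q_between x e : 0 < e -> exists q : Q, x < Q2R q < x + e.
Proof.
  intros He. destruct (archimed (/ e)) as [HN _].
  set (N := up (/ e)) in *.
  assert (HNe : 0 < / e) by (apply Rinv_0_lt_compat, He).
  assert (HN0 : (0 < N)%Z) by (apply lt_0_IZR; lra).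
  destruct (archimed (x * IZR N)) as [Hk1 Hk2].
  exists (up (x * IZR N) # Z.to_pos N).
  assert (Hq : Q2R (up (x * IZR N) # Z.to_pos N) = IZR (up (x * IZR N)) / IZR N)
    by (unfold Q2R; simpl; rewrite Z2Pos.id by exact HN0; reflexivity).
  assert (HeN : 1 < e * IZR N).
  { replace 1 with (e * / e) by (field; lra). apply Rmult_lt_compat_l; assumption. }
  rewrite Hq. split.
  - apply Rmult_lt_reg_r with (IZR N); [lra|]. field_simplify; lra.
  - apply Rmult_lt_reg_r with (IZR N); [lra|]. field_simplify; lra.
Qed.

Lemma continuity_pt_eq_on_Q f x c : continuity_pt f x ->
  (forall q : Q, x < Q2R q -> f (Q2R q) = c) -> f x = c.
Proof.
  intros Hf Hq. destruct (Req_dec (f x) c) as [E|E]; [exact E|exfalso].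
  destruct (Hf (Rabs (f x - c))) as [delta [Hdelta Hclose]]; [apply Rabs_pos_lt; lra|].
  destruct (exists_Q_between x delta Hdelta) as [q [Hq1 Hq2]].
  assert (Hnear : Rabs (f (Q2R q) - f x) < Rabs (f x - c)).
  { apply Hclose. split; [split; [exact I|lra]|].
    simpl. unfold Rdist. rewrite Rabs_right; lra. }
  rewrite Hq, Rabs_minus_sym in Hnear by exact Hq1. lra.
Qed.

Section Derivation.

Variable d : R -> R.
Hypothesis Hd : derivation d.

Lemma derivation_add x y : d (x + y) = d x + d y.
Proof. exact (proj1 Hd x y). Qed.

Lemma derivation_mul x y : d (x * y) = x * d y + y * d x.
Proof. exact (proj2 Hd x y). Qed.

Lemma derivation_0 : d 0 = 0.
Proof. pose proof (derivation_add 0 0) as E. rewrite Rplus_0_l in E. lra. Qed.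

Lemma derivation_1 : d 1 = 0.
Proof. pose proof (derivation_mul 1 1) as E. rewrite Rmult_1_l in E. lra. Qed.

Lemma derivation_opp x : d (- x) = - d x.
Proof.
  pose proof (derivation_add x (- x)) as E.
  rewrite Rplus_opp_r, derivation_0 in E. lra.
Qed.

Lemma derivation_inv x : x <> 0 -> d (/ x) = - d x / x ^ 2.
Proof.
  intros Hx. pose proof (derivation_mul x (/ x)) as E.
  rewrite Rinv_r, derivation_1 in E by exact Hx.
  apply (Rmult_eq_reg_l x); [|exact Hx]. field_simplify; [|exact Hx]. lra.
Qed.

Lemma derivation_INR n : d (INR n) = 0.
Proof.
  induction n as [|n IH]; [exact derivation_0|].
  rewrite S_INR, derivation_add, IH, derivation_1. ring.
Qed.

Lemma derivation_IZR z : d (IZR z) = 0.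
Proof.
  destruct z as [|p|p]; [exact derivation_0| |rewrite IZR_NEG, derivation_opp];
  rewrite <- (positive_nat_Z p), <- INR_IZR_INZ, derivation_INR; ring.
Qed.

Lemma derivation_eq0_of_pos : (forall x, 0 < x -> d x = 0) -> forall z, d z = 0.
Proof.
  intros Hpos z. destruct (Rtotal_order z 0) as [Hz|[Hz|Hz]].
  - rewrite <- (Ropp_involutive z), derivation_opp, Hpos by lra. ring.
  - subst z. exact derivation_0.
  - exact (Hpos z Hz).
Qed.

Lemma derivation_Q2R q : d (Q2R q) = 0.
Proof.
  unfold Q2R. rewrite derivation_mul, derivation_inv, !derivation_IZR.
  - unfold Rdiv. ring.
  - apply not_0_IZR. discriminate.
Qed.

Definition logderiv x := d x / x.

Lemma logderiv_mul x y : x <> 0 -> y <> 0 ->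
  logderiv (x * y) = logderiv x + logderiv y.
Proof. intros Hx Hy. unfold logderiv. rewrite derivation_mul. field. auto. Qed.

Lemma logderiv_inv x : x <> 0 -> logderiv (/ x) = - logderiv x.
Proof. intros Hx. unfold logderiv. rewrite derivation_inv by exact Hx. field. exact Hx. Qed.

Lemma logderiv_pow x n : x <> 0 -> logderiv (x ^ n) = INR n * logderiv x.
Proof.
  intros Hx. induction n as [|n IH].
  - unfold logderiv. rewrite pow_O, derivation_1. simpl. unfold Rdiv. ring.
  - rewrite <- tech_pow_Rmult, logderiv_mul, IH, S_INR by auto using pow_nonzero. ring.
Qed.

Lemma logderiv_powerRZ x z : x <> 0 -> logderiv (powerRZ x z) = IZR z * logderiv x.
Proof.
  intros Hx. destruct z as [|p|p]; simpl powerRZ.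
  - unfold logderiv. rewrite derivation_1. simpl. field. exact Hx.
  - rewrite logderiv_pow, INR_IZR_INZ, positive_nat_Z by exact Hx. reflexivity.
  - rewrite logderiv_inv, logderiv_pow, INR_IZR_INZ, positive_nat_Z, IZR_NEG
      by auto using pow_nonzero.
    ring.
Qed.

Lemma logderiv_Rpower_Q x q : 0 < x ->
  logderiv (Rpower x (Q2R q)) = Q2R q * logderiv x.
Proof.
  intros Hx. destruct q as [m n].
  set (N := Pos.to_nat n).
  assert (HN : IZR (Zpos n) = INR N) by (unfold N; rewrite INR_IZR_INZ, positive_nat_Z; reflexivity).
  assert (HN0 : 0 < INR N) by (rewrite <- HN; apply IZR_lt; lia).
  assert (Hq : Q2R (m # n) = IZR m / INR N) by (unfold Q2R; simpl; rewrite HN; reflexivity).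
  set (y := Rpower x (Q2R (m # n))).
  assert (Hy0 : 0 < y) by apply Rpower_pos.
  assert (Hy : y ^ N = powerRZ x m).
  { unfold y. rewrite <- Rpower_pow, Rpower_mult, powerRZ_Rpower, Hq by (assumption || apply Rpower_pos).
    f_equal. field. lra. }
  assert (E : INR N * logderiv y = IZR m * logderiv x).
  { rewrite <- logderiv_pow, Hy, logderiv_powerRZ by lra.
    reflexivity. }
  rewrite Hq. apply (Rmult_eq_reg_l (INR N)); [|lra]. rewrite E. field. lra.
Qed.

Lemma derivation_div_IZR x z : IZR z <> 0 -> d (x / IZR z) = d x / IZR z.
Proof.
  intros Hz. unfold Rdiv. rewrite derivation_mul, derivation_inv, derivation_IZR by exact Hz.
  field. exact Hz.
Qed.

Lemma logderiv_power_mean q x y : Q2R q <> 0 -> 0 < x -> 0 < y ->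
  let a := Rpower x (Q2R q) in let b := Rpower y (Q2R q) in
  logderiv (H (Q2R q) x y) = (a * logderiv x + b * logderiv y) / (a + b).
Proof.
  intros Hq Hx Hy a b.
  assert (Ha : 0 < a) by apply Rpower_pos.
  assert (Hb : 0 < b) by apply Rpower_pos.
  rewrite H_nonzero by exact Hq.
  set (A := (Rpower x (Q2R q) + Rpower y (Q2R q)) / 2). fold a b in A.
  assert (HA : 0 < A) by (unfold A; lra).
  assert (LA : logderiv A = (a * (Q2R q * logderiv x) + b * (Q2R q * logderiv y)) / (a + b)).
  { rewrite <- !logderiv_Rpower_Q by assumption. fold a b.
    unfold logderiv, A. rewrite (derivation_div_IZR _ 2), derivation_add by lra.
    field. lra. }
  apply (Rmult_eq_reg_l (Q2R q)); [|exact Hq].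
  rewrite <- logderiv_Rpower_Q, Rpower_inv_l, LA by (assumption || apply Rpower_pos).
  field. lra.
Qed.

End Derivation.

Section F_properties.

Variables (d : R -> R) (alpha : R).
Hypotheses (Hd : derivation d) (Halpha : 0 < alpha).

Lemma F_pos x : 0 < F d alpha x.
Proof. apply Rmult_lt_0_compat; [apply Rpower_pos|apply exp_pos]. Qed.

Lemma F_mul x y : 0 < x -> 0 < y -> F d alpha (x * y) = F d alpha x * F d alpha y.
Proof.
  intros Hx Hy. unfold F. rewrite <- Rpower_mult_distr by assumption.
  fold (logderiv d (x * y)) (logderiv d x) (logderiv d y).
  rewrite logderiv_mul, exp_plus by (assumption || lra). ring.
Qed.

Lemma Rpower_F c x :
  Rpower (F d alpha x) c = Rpower x (alpha * c) * exp (c * logderiv d x).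
Proof.
  unfold F. rewrite <- Rpower_mult_distr by (apply Rpower_pos || apply exp_pos).
  rewrite Rpower_mult, Rpower_exp. reflexivity.
Qed.

Lemma F_power_mean_le q x y : 0 < Q2R q -> 0 < x -> 0 < y ->
  F d alpha (H (Q2R q) x y) <= H (Q2R q / alpha) (F d alpha x) (F d alpha y).
Proof.
  intros Hq Hx Hy. set (p := Q2R q) in *. set (c := p / alpha).
  assert (Hc : 0 < c) by (apply Rdiv_lt_0_compat; assumption).
  assert (Hpc : alpha * c = p) by (unfold c; field; lra).
  set (a := Rpower x p). set (b := Rpower y p).
  assert (Ha : 0 < a) by apply Rpower_pos.
  assert (Hb : 0 < b) by apply Rpower_pos.
  assert (LM := logderiv_power_mean d Hd q x y (Rgt_not_eq _ _ Hq) Hx Hy). fold p a b in LM.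
  assert (HM : Rpower (H p x y) p = (a + b) / 2).
  { rewrite H_nonzero by lra. fold a b. apply Rpower_inv_l; lra. }
  set (T := (Rpower (F d alpha x) c + Rpower (F d alpha y) c) / 2).
  assert (HT : 0 < T) by (unfold T; pose proof (Rpower_pos (F d alpha x) c);
                            pose proof (Rpower_pos (F d alpha y) c); lra).
  rewrite (H_nonzero c) by lra. fold T.
  apply (Rpower_le_reg_r _ _ c); [apply F_pos|apply Rpower_pos|exact Hc|].
  rewrite Rpower_inv_l, Rpower_F, Hpc, HM, LM by lra.
  unfold T. rewrite !Rpower_F, Hpc. fold a b.
  pose proof (exp_weighted_mean_le a b (c * logderiv d x) (c * logderiv d y) Ha Hb) as J.
  replace ((a * (c * logderiv d x) + b * (c * logderiv d y)) / (a + b))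
    with (c * ((a * logderiv d x + b * logderiv d y) / (a + b))) in J by (field; lra).
  lra.
Qed.

End F_properties.

Lemma derivation_eq0_of_F_continuous d alpha : derivation d -> 0 < alpha ->
  (forall x, 0 < x -> continuity_pt (F d alpha) x) -> forall z, d z = 0.
Proof.
  intros Hd Halpha Hcont. apply (derivation_eq0_of_pos d Hd). intros x Hx.
  assert (Hpow : continuity_pt (fun y => Rpower y alpha) x).
  { apply derivable_continuous_pt. exists (alpha * Rpower x (alpha - 1)).
    apply derivable_pt_lim_power; assumption. }
  assert (HG : continuity_pt (fun y => exp (logderiv d y)) x).
  { apply (continuity_pt_locally_ext (F d alpha / fun y => Rpower y alpha)%F _ 1);
      [lra| |apply continuity_pt_div; [apply Hcont, Hx|exact Hpow|apply Rgt_not_eq, Rpower_pos]].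
    intros y _. unfold div_fct, F, logderiv. field. apply Rgt_not_eq, Rpower_pos. }
  assert (G1 : exp (logderiv d x) = 1).
  { apply (continuity_pt_eq_on_Q _ _ _ HG). intros q _.
    unfold logderiv. rewrite (derivation_Q2R d Hd), Rdiv_0_l, exp_0. reflexivity. }
  rewrite <- exp_0 in G1. apply exp_inv in G1. unfold logderiv in G1.
  replace (d x) with (d x / x * x) by (field; lra). rewrite G1. ring.
Qed.

Theorem theorem3 (d : R -> R) (alpha : R) :
  derivation d -> 0 < alpha ->
  (* F maps R_+ into R_+ *)
  (forall x, 0 < x -> 0 < F d alpha x) /\
  (* multiplicative *)
  (forall x y, 0 < x -> 0 < y -> F d alpha (x * y) = F d alpha x * F d alpha y) /\
  (* (p, p/alpha)-Jensen convex for every positive rational p *)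
  (forall (q : Q) x y, (0 < q)%Q -> 0 < x -> 0 < y ->
     F d alpha (H (Q2R q) x y) <=
     H (Q2R q / alpha) (F d alpha x) (F d alpha y)) /\
  (* if d is nonzero, F is discontinuous on R_+ *)
  ((exists z, d z <> 0) -> ~ (forall x, 0 < x -> continuity_pt (F d alpha) x)).
Proof.
  intros Hd Halpha. split; [|split; [|split]].
  - intros x _. apply F_pos.
  - apply F_mul, Hd.
  - intros q x y Hq. apply F_power_mean_le; [exact Hd|exact Halpha|].
    rewrite <- RMicromega.Q2R_0. apply Qlt_Rlt, Hq.
  - intros [z Hz] Hcont. exact (Hz (derivation_eq0_of_F_continuous d alpha Hd Halpha Hcont z)).
Qed.
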